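(* Let $\mathbb F$ be a field. For $u,v\in\mathbb F$ let $\mathcal D(u,v)$ be the $2\times2\times2$ spatial matrix with horizontal slices \[ \mathcal D(u,v)=\left\|\begin{bmatrix}1&0\\0&1\end{bmatrix}\middle|\begin{bmatrix}0&v\\1&u\end{bmatrix}\right\|. \] Then $\mathcal D(u,v)$ is equivalent to $\mathcal D(u',v')$ ($u',v'\in\mathbb F$) if and only if there exist $a,b,c,d\in\mathbb F$ such that \[ ad-bc\ne0,\qquad a^2+uab-vb^2\ne0, \] and \[ u'=\frac{2ac+uad+ucb-2vbd}{a^2+uab-vb^2},\qquad v'=\frac{-c^2-ucd+vd^2}{a^2+uab-vb^2}. \]
   Context: An $m\times n\times q$ spatial matrix over $\mathbb F$ is an array $[a_{ijk}]$ ($1\le i\le m$, $1\le j\le n$, $1\le k\le q$) with entries in $\mathbb F$, written $\|A_1|\dots|A_q\|$ with horizontal slices $A_k=[a_{ijk}]_{ij}$. Two $m\times n\times q$ spatial matrices $[a_{ijk}]$ and $[b_{ijk}]$ are equivalent if there are nonsingular matrices $R=[r_{ii'}]$ ($m\times m$), $S=[s_{jj'}]$ ($n\times n$), $T=[t_{kk'}]$ ($q\times q$) with $b_{i'j'k'}=\sum_{i,j,k}a_{ijk}r_{ii'}s_{jj'}t_{kk'}$ for all $i',j',k'$. *)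

From HB Require Import structures.
From mathcomp Require Import all_boot all_order all_algebra.
Set Implicit Arguments. Unset Strict Implicit. Unset Printing Implicit Defensive.
Import Order.TTheory GRing.Theory Num.Theory.
Local Open Scope ring_scope.

(* An m x n x q spatial matrix over F: entries a i j k, i : 'I_m, j : 'I_n, k : 'I_q.
   The horizontal slice A_k is the m x n matrix (a i j k)_{i,j}. *)
Definition spmx (F : Type) (m n q : nat) := 'I_m -> 'I_n -> 'I_q -> F.

Definition spmx_equiv (F : fieldType) (m n q : nat) (A B : spmx F m n q) : Prop :=
  exists (R : 'M[F]_m) (S : 'M[F]_n) (T : 'M[F]_q),
    [/\ R \in unitmx, S \in unitmx, T \in unitmx &
      forall (i' : 'I_m) (j' : 'I_n) (k' : 'I_q),
        B i' j' k' = \sum_(i < m) \sum_(j < n) \sum_(k < q)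
                       A i j k * R i i' * S j j' * T k k'].

(* D(u,v) = || [1 0; 0 1] | [0 v; 1 u] || (slice k, row i, column j). *)
Definition Dsp (F : fieldType) (u v : F) : spmx F 2 2 2 :=
  fun i j k =>
    if val k == 0%N then (if val i == val j then 1 else 0)
    else if val i == 0%N then (if val j == 0%N then 0 else v)
    else (if val j == 0%N then 1 else u).

From HB Require Import structures.
From mathcomp Require Import all_boot all_order all_algebra.
From mathcomp Require Import ring.
Import Order.TTheory GRing.Theory Num.Theory.
Local Open Scope ring_scope.

(* Writing M for the companion matrix [0 v; 1 u], the slices of D(u, v) are I
   and M, so an equivalence with matrices R, S, T = [a c; b d] amounts to
   R^T (a + b M) S = I and R^T (c + d M) S = M', i.e. to M' being similar to
   N = (c + d M) (a + b M)^-1.  This N is again a pencil alpha + beta M with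
   beta = (ad - bc) / (a^2 + u a b - v b^2) nonzero, hence not scalar, and
   such a 2 x 2 matrix is similar to the companion matrix of x^2 - u' x - v'
   exactly when u' = tr N and v' = - det N. *)

Section Slices.
Context {F : fieldType} {m n q : nat}.

Definition slice (A : spmx F m n q) (k : 'I_q) : 'M[F]_(m, n) :=
  \matrix_(i, j) A i j k.

Lemma slice_changeE (A : spmx F m n q) (R : 'M_m) (S : 'M_n) (T : 'M_q)
    k' i' j' :
  (R^T *m (\sum_k T k k' *: slice A k) *m S) i' j'
  = \sum_(i < m) \sum_(j < n) \sum_(k < q) A i j k * R i i' * S j j' * T k k'.
Proof.
rewrite mxE [RHS]exchange_big /=; apply: eq_bigr => j _.
rewrite mxE big_distrl /=; apply: eq_bigr => i _.
rewrite !mxE summxE big_distrr big_distrl /=; apply: eq_bigr => k _.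
by rewrite !mxE; ring.
Qed.

Lemma spmx_equiv_slices (A B : spmx F m n q) :
  spmx_equiv A B <->
  exists R S T, [/\ R \in unitmx, S \in unitmx, T \in unitmx &
    forall k', slice B k' = R^T *m (\sum_k T k k' *: slice A k) *m S].
Proof.
split=> -[R [S [T [uR uS uT eqB]]]]; exists R, S, T; split=> //.
  by move=> k'; apply/matrixP => i' j'; rewrite slice_changeE mxE.
by move=> i' j' k'; rewrite -slice_changeE -eqB mxE.
Qed.

End Slices.

Section Similarity.
Context {F : fieldType} {n : nat}.
Implicit Types (A B P Q M : 'M[F]_n).

Lemma simmx_trace {A B} : A ~_{in unitmx} B -> \tr A = \tr B.
Proof.
by move=> [C uC /(simmxRL uC) ->]; rewrite mxtrace_mulC mulmxA mulVmx ?mul1mx.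
Qed.

Lemma simmx_det {A B} : A ~_{in unitmx} B -> \det A = \det B.
Proof.
move=> [C uC /(simmxRL uC) ->].
by rewrite !det_mulmx det_inv mulrC mulrA mulVr ?mul1r // -unitmxE.
Qed.

Lemma pencil_normal_formP P Q M :
  (exists R S, [/\ R \in unitmx, S \in unitmx,
     R^T *m P *m S = 1%:M & R^T *m Q *m S = M]) <->
  P \in unitmx /\ Q *m invmx P ~_{in unitmx} M.
Proof.
split=> [[R [S [uR uS PS QS]]] | [uP [C uC /(simmxRL uC) defM]]].
  have SRtP : S *m R^T *m P = 1%:M by rewrite -mulmxA mulmx1C.
  have [_ uP] := mulmx1_unit SRtP.
  have SRt : S *m R^T = invmx P.
    by rewrite -[LHS]mulmx1 -(mulmxV uP) mulmxA SRtP mul1mx.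
  split=> //; exists R^T; rewrite ?unitmx_tr //.
  by apply/simmxP; rewrite ?unitmx_tr // -QS -SRt !mulmxA.
exists C^T, (invmx P *m invmx C).
rewrite trmxK unitmx_tr unitmx_mul !unitmx_inv uP uC defM.
by rewrite !mulmxA mulmxK // mulmxV.
Qed.
End Similarity.

Section TwoByTwo.
Context {F : fieldType}.
Implicit Types (a b c d u v : F) (A : 'M[F]_2).

Definition mx2 a b c d : 'M[F]_2 :=
  \matrix_(i, j) if i == ord0 then (if j == ord0 then a else b)
                 else (if j == ord0 then c else d).

Lemma ord2P (i : 'I_2) : i = ord0 \/ i = ord_max.
Proof. by case: i => -[|[|//]] ?; [left | right]; apply: val_inj. Qed.

Lemma sum_ord2 (V : nmodType) (f : 'I_2 -> V) :
  \sum_(i < 2) f i = f ord0 + f ord_max.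
Proof. by rewrite big_ord_recr big_ord1; congr (f _ + _); apply: val_inj. Qed.

Lemma mx2_eta A :
  A = mx2 (A ord0 ord0) (A ord0 ord_max) (A ord_max ord0) (A ord_max ord_max).
Proof.
by apply/matrixP => i j; rewrite mxE; case: (ord2P i) => ->; case: (ord2P j) => ->.
Qed.

Lemma mul_mx2 a b c d a' b' c' d' :
  mx2 a b c d *m mx2 a' b' c' d'
  = mx2 (a * a' + b * c') (a * b' + b * d') (c * a' + d * c') (c * b' + d * d').
Proof. by rewrite [LHS]mx2_eta !mxE !sum_ord2 !mxE. Qed.

Lemma det_mx2 a b c d : \det (mx2 a b c d) = a * d - b * c.
Proof.
by rewrite (expand_det_row _ ord0) sum_ord2 /cofactor !det_mx11 !mxE /=; ring.
Qed.

Lemma trace_mx2 a b c d : \tr (mx2 a b c d) = a + d.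
Proof. by rewrite /mxtrace sum_ord2 !mxE. Qed.

Definition companion2 u v : 'M[F]_2 := mx2 0 v 1 u.
Definition pencil u v a b : 'M[F]_2 := a%:M + b *: companion2 u v.
Definition qform u v a b : F := a ^+ 2 + u * a * b - v * b ^+ 2.

Lemma pencilE u v a b : pencil u v a b = mx2 a (b * v) b (a + b * u).
Proof. by rewrite [LHS]mx2_eta !mxE /=; congr mx2; ring. Qed.

Lemma trace_pencil u v a b : \tr (pencil u v a b) = 2 * a + u * b.
Proof. by rewrite pencilE trace_mx2; ring. Qed.

Lemma det_pencil u v a b : \det (pencil u v a b) = qform u v a b.
Proof. by rewrite pencilE det_mx2 /qform; ring. Qed.

Lemma mul_pencil u v a b c d :
  pencil u v a b *m pencil u v c d
  = pencil u v (a * c + v * b * d) (a * d + b * c + u * b * d).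
Proof. by rewrite !pencilE mul_mx2; congr mx2; ring. Qed.

Lemma pencil_unit u v a b : (pencil u v a b \in unitmx) = (qform u v a b != 0).
Proof. by rewrite unitmxE det_pencil unitfE. Qed.

Lemma pencil_div u v a b c d : qform u v a b != 0 ->
  pencil u v c d *m invmx (pencil u v a b)
  = pencil u v ((a * c + u * b * c - v * b * d) / qform u v a b)
               ((a * d - b * c) / qform u v a b).
Proof.
move=> nq; apply: (canLR (mulmxK _)); first by rewrite pencil_unit.
by rewrite mul_pencil; congr pencil; rewrite /qform in nq *; field.
Qed.

Lemma pencil_simmx_companion u v u' v' a b : b != 0 ->
  pencil u v a b ~_{in unitmx} companion2 u' v' <->
  u' = 2 * a + u * b /\ v' = - qform u v a b.
Proof.
move=> nb; split=> [sim | [-> ->]].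
  rewrite -(trace_pencil u v) -det_pencil (simmx_trace sim) (simmx_det sim).
  by rewrite trace_mx2 det_mx2; split; ring.
(* b times the inverse of the basis (e0, N e0) built on the cyclic vector e0 *)
have uC : mx2 b (- a) 0 1 \in unitmx.
  by rewrite unitmxE det_mx2 mulr1 mulr0 subr0 unitfE.
exists (mx2 b (- a) 0 1) => //; apply/simmxP => //.
by rewrite pencilE !mul_mx2 /qform; congr mx2; ring.
Qed.

Lemma pencil_ratio_simmx_companion {u v a b c d} u' v' :
  a * d - b * c != 0 -> qform u v a b != 0 ->
  pencil u v c d *m invmx (pencil u v a b) ~_{in unitmx} companion2 u' v' <->
  u' = (2 * a * c + u * a * d + u * c * b - 2 * v * b * d) / qform u v a b /\
  v' = (- c ^+ 2 - u * c * d + v * d ^+ 2) / qform u v a b.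
Proof.
move=> nT nq; rewrite pencil_div // pencil_simmx_companion; last first.
  by rewrite mulf_neq0 ?invr_eq0.
rewrite /qform in nq *.
by split=> -[-> ->]; split; field.
Qed.

End TwoByTwo.

Section DspSlices.
Context {F : fieldType}.
Implicit Types (u v : F).

Lemma slice_Dsp_first u v : slice (Dsp u v) ord0 = 1%:M.
Proof.
by apply/matrixP => i j; rewrite !mxE; case: (ord2P i) => ->; case: (ord2P j) => ->.
Qed.

Lemma slice_Dsp_last u v : slice (Dsp u v) ord_max = companion2 u v.
Proof.
by apply/matrixP => i j; rewrite !mxE; case: (ord2P i) => ->; case: (ord2P j) => ->.
Qed.

Lemma Dsp_combination u v (T : 'M[F]_2) k' :
  \sum_k T k k' *: slice (Dsp u v) k = pencil u v (T ord0 k') (T ord_max k').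
Proof. by rewrite sum_ord2 slice_Dsp_first slice_Dsp_last scalemx1. Qed.

Lemma Dsp_equivP u v u' v' :
  spmx_equiv (Dsp u v) (Dsp u' v') <->
  exists a b c d, a * d - b * c != 0 /\
    exists R S, [/\ R \in unitmx, S \in unitmx,
      R^T *m pencil u v a b *m S = 1%:M &
      R^T *m pencil u v c d *m S = companion2 u' v'].
Proof.
rewrite spmx_equiv_slices.
split=> [[R [S [T [uR uS uT eqB]]]] | [a [b [c [d [nT [R [S [uR uS eqI eqM]]]]]]]]].
  exists (T ord0 ord0), (T ord_max ord0), (T ord0 ord_max), (T ord_max ord_max).
  split.
    move: uT; rewrite unitmxE unitfE {1}[T]mx2_eta det_mx2.
    by rewrite [T ord_max _ * _]mulrC.
  exists R, S; split=> //.
    by rewrite -Dsp_combination -eqB slice_Dsp_first.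
  by rewrite -Dsp_combination -eqB slice_Dsp_last.
exists R, S, (mx2 a c b d); split=> //.
  by rewrite unitmxE det_mx2 unitfE [c * b]mulrC.
by move=> k'; rewrite Dsp_combination !mxE; case: (ord2P k') => ->;
  rewrite ?slice_Dsp_first ?slice_Dsp_last ?eqI ?eqM.
Qed.

End DspSlices.

Theorem lemma3 (F : fieldType) (u v u' v' : F) :
  spmx_equiv (Dsp u v) (Dsp u' v') <->
  exists a b c d : F,
    [/\ a * d - b * c != 0,
        a ^+ 2 + u * a * b - v * b ^+ 2 != 0,
        u' = (2 * a * c + u * a * d + u * c * b - 2 * v * b * d)
               / (a ^+ 2 + u * a * b - v * b ^+ 2) &
        v' = (- c ^+ 2 - u * c * d + v * d ^+ 2)
               / (a ^+ 2 + u * a * b - v * b ^+ 2)].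
Proof.
rewrite Dsp_equivP; split=> -[a [b [c [d H]]]]; exists a, b, c, d.
  case: H => nT /pencil_normal_formP [uP sim].
  have nq : qform u v a b != 0 by rewrite -pencil_unit.
  by have [] := (pencil_ratio_simmx_companion u' v' nT nq).1 sim.
case: H => nT nq eq_u' eq_v'; split=> //; apply/pencil_normal_formP.
rewrite pencil_unit; split=> //.
exact/(pencil_ratio_simmx_companion u' v' nT nq).
Qed.
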